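(* Let $G_1$ and $G_2$ be connected graphs, each with at least two vertices. Then $$\chi_d^t(G_1\star G_2)\leq \chi_d^t(G_1)+\chi_d^t(G_2).$$
   Context: All graphs are simple and finite. A total dominator coloring (TD-coloring) of a graph $G$ with no isolated vertex is a proper vertex coloring of $G$ in which every vertex of $G$ is adjacent to every vertex of some color class (a color class being the set of all vertices receiving a given color). The total dominator chromatic number (TDC-number) $\chi_d^t(G)$ is the minimum number of colors in a TD-coloring of $G$. The neighbourhood corona $G_1\star G_2$ of graphs $G_1$ and $G_2$ is the graph obtained by taking one copy of $G_1$ and $|V(G_1)|$ copies of $G_2$, and, for each $i$, joining every neighbour (in $G_1$) of the $i$-th vertex of $G_1$ to every vertex of the $i$-th copy of $G_2$. *)

From mathcomp Require Import all_boot.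
Set Implicit Arguments. Unset Strict Implicit. Unset Printing Implicit Defensive.

Definition simple_graph (T : finType) (e : rel T) : Prop :=
  symmetric e /\ irreflexive e.

Definition connected_graph (T : finType) (e : rel T) : Prop :=
  forall x y : T, connect e x y.

Definition proper_coloring (T : finType) (e : rel T) (k : nat) (c : T -> 'I_k) : bool :=
  [forall x, forall y, e x y ==> (c x != c y)].

Definition total_dominating_coloring (T : finType) (e : rel T) (k : nat)
    (c : T -> 'I_k) : bool :=
  [forall v, exists i : 'I_k,
      [exists u, c u == i] && [forall u, (c u == i) ==> e v u]].

Definition td_coloring (T : finType) (e : rel T) (k : nat) (c : T -> 'I_k) : bool :=
  proper_coloring e c && total_dominating_coloring e c.

Definition has_td_coloring (T : finType) (e : rel T) (k : nat) : bool :=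
  [exists c : {ffun T -> 'I_k}, td_coloring e c].

(* total dominator chromatic number: least k admitting a TD-colouring
   (a TD-colouring with #|T| colours always exists when G has no isolated vertex) *)
Definition tdc_number (T : finType) (e : rel T) : nat :=
  find (has_td_coloring e) (iota 0 #|T|.+1).

(* neighbourhood corona G1 * G2: vertices are inl a (copy of G1) and
   inr (i, y) (vertex y of the i-th copy of G2). *)
Definition ncorona_rel (T1 T2 : finType) (e1 : rel T1) (e2 : rel T2)
    (x y : T1 + (T1 * T2)) : bool :=
  match x, y with
  | inl a, inl b => e1 a b
  | inl a, inr (i, _) => e1 a i
  | inr (i, _), inl a => e1 i a
  | inr (i, u), inr (j, w) => (i == j) && e2 u w
  end.

From mathcomp Require Import all_boot.

Set Implicit Arguments.
Unset Strict Implicit.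
Unset Printing Implicit Defensive.

(* Colour the copy of G1 by a TD-colouring of G1 and every copy of G2 by one
   fixed proper colouring of G2, using disjoint palettes. A vertex of the
   corona sees, among the G1-vertices, exactly the neighbours of its G1-vertex
   (itself, or the vertex whose copy of G2 it lies in), so the colour class it
   dominates in G1 is still dominated. Edges of the corona either stay inside
   G1, stay inside one copy of G2, or join the two palettes, so the colouring
   is proper. *)

Lemma proper_coloringP (T : finType) (e : rel T) k (c : T -> 'I_k) :
  reflect (forall x y, e x y -> c x != c y) (proper_coloring e c).
Proof.
apply: (iffP forallP) => [Pc x y | Pc x].
  by move/forallP: (Pc x) => /(_ y) /implyP.
by apply/forallP => y; apply/implyP; apply: Pc.
Qed.

Lemma td_coloring_eq (T : finType) (e : rel T) k (c c' : T -> 'I_k) :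
  c =1 c' -> td_coloring e c = td_coloring e c'.
Proof.
move=> Ec; rewrite /td_coloring /proper_coloring /total_dominating_coloring.
congr (_ && _).
  by apply: eq_forallb => x; apply: eq_forallb => y; rewrite !Ec.
apply: eq_forallb => v; apply: eq_existsb => i.
by congr (_ && _); [apply: eq_existsb | apply: eq_forallb] => u; rewrite Ec.
Qed.

Lemma has_td_coloringP (T : finType) (e : rel T) k :
  reflect (exists c : T -> 'I_k, td_coloring e c) (has_td_coloring e k).
Proof.
apply: (iffP existsP) => [[c Hc] | [c Hc]]; first by exists c.
by exists [ffun x => c x]; rewrite (td_coloring_eq e (ffunE c)).
Qed.

Lemma tdc_number_le (T : finType) (e : rel T) k :
  has_td_coloring e k -> tdc_number e <= k.
Proof.
move=> Hk; rewrite leqNgt; apply/negP => lt_k_tdc.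
have := find_size (has_td_coloring e) (iota 0 #|T|.+1).
rewrite size_iota => tdc_le_card.
have := before_find 0 lt_k_tdc.
by rewrite nth_iota ?add0n ?Hk // (leq_trans lt_k_tdc).
Qed.

Lemma has_td_coloring_tdc_number (T : finType) (e : rel T) k :
  k <= #|T| -> has_td_coloring e k -> has_td_coloring e (tdc_number e).
Proof.
move=> le_k_card Hk.
have Hhas : has (has_td_coloring e) (iota 0 #|T|.+1).
  by apply/hasP; exists k; rewrite // mem_iota add0n ltnS.
have := nth_find 0 Hhas; move: Hhas; rewrite has_find size_iota => lt_tdc.
by rewrite nth_iota // add0n.
Qed.

Lemma has_td_coloring_card (T : finType) (e : rel T) :
  irreflexive e -> (forall v, exists u, e v u) -> has_td_coloring e #|T|.
Proof.
move=> irr_e nbr; apply/has_td_coloringP; exists (@enum_rank T).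
apply/andP; split.
  apply/proper_coloringP => x y exy; apply: contraTneq exy.
  by move/enum_rank_inj ->; rewrite irr_e.
apply/forallP => v; have [u evu] := nbr v.
apply/existsP; exists (enum_rank u); apply/andP; split.
  by apply/existsP; exists u.
by apply/forallP => w; apply/implyP => /eqP /enum_rank_inj ->.
Qed.

Lemma connected_neighbour (T : finType) (e : rel T) :
  connected_graph e -> 1 < #|T| -> forall v, exists u, e v u.
Proof.
move=> conn_e card_T v.
have [w neq_wv] : exists w, w != v.
  move: card_T; rewrite (cardD1 v) inE add1n ltnS => /card_gt0P [w].
  by rewrite inE => /andP [neq_wv _]; exists w.
have /connectP [[|u p] /= path_vw last_w] := conn_e v w.
  by rewrite last_w eqxx in neq_wv.
by exists u; case/andP: path_vw.
Qed.

Section NeighbourhoodCorona.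

Variables (T1 T2 : finType) (e1 : rel T1) (e2 : rel T2).

Definition ncorona_base (x : T1 + T1 * T2) : T1 :=
  match x with inl a => a | inr (i, _) => i end.

Lemma ncorona_rel_inl x a : ncorona_rel e1 e2 x (inl a) = e1 (ncorona_base x) a.
Proof. by case: x => [|[]]. Qed.

Variables (k1 k2 : nat) (c1 : T1 -> 'I_k1) (c2 : T2 -> 'I_k2).

Definition ncorona_coloring (x : T1 + T1 * T2) : 'I_(k1 + k2) :=
  match x with inl a => lshift k2 (c1 a) | inr (_, y) => rshift k1 (c2 y) end.

Lemma proper_ncorona_coloring :
  proper_coloring e1 c1 -> proper_coloring e2 c2 ->
  proper_coloring (ncorona_rel e1 e2) ncorona_coloring.
Proof.
move=> /proper_coloringP P1 /proper_coloringP P2; apply/proper_coloringP.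
case=> [a|[i u]] [b|[j w]] /=; rewrite ?eq_shift //; first exact: P1.
by case/andP=> _; apply: P2.
Qed.

Lemma total_dominating_ncorona_coloring :
  total_dominating_coloring e1 c1 ->
  total_dominating_coloring (ncorona_rel e1 e2) ncorona_coloring.
Proof.
move=> D1; apply/forallP => x.
have /existsP [j /andP [/existsP [a /eqP c1a] dom_j]] := forallP D1 (ncorona_base x).
apply/existsP; exists (lshift k2 j); apply/andP; split.
  by apply/existsP; exists (inl a); rewrite /= c1a.
apply/forallP => [[b|[i w]]]; rewrite /= ?eq_shift // ncorona_rel_inl.
exact: (forallP dom_j).
Qed.

Lemma td_ncorona_coloring :
  td_coloring e1 c1 -> proper_coloring e2 c2 ->
  td_coloring (ncorona_rel e1 e2) ncorona_coloring.
Proof.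
case/andP=> P1 D1 P2; apply/andP; split.
  exact: proper_ncorona_coloring.
exact: total_dominating_ncorona_coloring.
Qed.

End NeighbourhoodCorona.

Lemma td_coloring_tdc_number_connected (T : finType) (e : rel T) :
  simple_graph e -> connected_graph e -> 1 < #|T| ->
  exists c : T -> 'I_(tdc_number e), td_coloring e c.
Proof.
move=> [_ irr_e] conn_e card_T; apply/has_td_coloringP.
apply: (has_td_coloring_tdc_number (leqnn _)).
exact: has_td_coloring_card irr_e (connected_neighbour conn_e card_T).
Qed.

Theorem theorem3 (T1 T2 : finType) (e1 : rel T1) (e2 : rel T2) :
  simple_graph e1 -> simple_graph e2 ->
  connected_graph e1 -> connected_graph e2 ->
  1 < #|T1| -> 1 < #|T2| ->
  tdc_number (ncorona_rel e1 e2) <= tdc_number e1 + tdc_number e2.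
Proof.
move=> S1 S2 C1 C2 N1 N2.
have [c1 td_c1] := td_coloring_tdc_number_connected S1 C1 N1.
have [c2 /andP [proper_c2 _]] := td_coloring_tdc_number_connected S2 C2 N2.
apply/tdc_number_le/has_td_coloringP.
by exists (ncorona_coloring c1 c2); apply: td_ncorona_coloring.
Qed.
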